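(* In the setting described in the context, suppose $m>p\ge2$, $0\le w_l<1$ for each $l=1,\ldots,m$, and $f(\mathbf{w})>0$. Fix $i\in\{1,\ldots,m\}$ and let $a,b,A,B$ be as defined in the context. Then the solution of $\max_{0\le x\le1}h_i(x)$ belongs to one of the following four cases: (1) If $A\ne B$, $A>0$, $B>0$, $a>b$, $aB>bA$, and $bA<(a-b)B$, then \[ \max_{0\le x\le1}h_i(x)=\left(\frac{\sqrt{A(a-b)}-\sqrt{aB-bA}}{A-B}\right)^2, \] attained uniquely at $x_*=\frac{t_*-B}{A-B}\in(0,1)$, where $t_*=\sqrt{\frac{A(aB-bA)}{a-b}}\in(\min\{A,B\},\max\{A,B\})$; (2) If $A=B$ and $a>2b$, then $\max_{0\le x\le1}h_i(x)=\frac{a^2}{4(a-b)B}>0$, attained uniquely at $x_*=\frac{a-2b}{2a-2b}\in(0,1)$; (3) If $A\ne B$, $B=0$, and $b=0$, then $\max_{0\le x\le1}h_i(x)=\frac{a}{A}>0$, attained uniquely at $x_*=0$; (4) For all other cases, $\max_{0\le x\le1}h_i(x)=\frac{b}{B}>0$, attained at the unique $x_*=0$.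
   Context: Given a model matrix $\mathbf{X}\in\mathbb{R}^{m\times p}$ (rows $\mathbf{q}(\mathbf{x}_i)^T$ for distinct design points under a generalized linear model) and numbers $\nu_1,\ldots,\nu_m\ge0$ (where $\nu_i=(\partial\mu_i/\partial\eta_i)^2/\mathrm{Var}(Y_i)$), for $\mathbf{w}=(w_1,\ldots,w_m)^T$ with $w_l\ge0$, $\sum_lw_l=1$, let $\mathbf{W}=\mathrm{diag}\{w_1\nu_1,\ldots,w_m\nu_m\}$, $f(\mathbf{w})=|\mathbf{X}^T\mathbf{W}\mathbf{X}|$, $f_{-j}(\mathbf{w})=|\mathbf{X}_{-j}^T\mathbf{W}\mathbf{X}_{-j}|$ for $j=1,\ldots,p$ (with $\mathbf{X}_{-j}$ being $\mathbf{X}$ with its $j$th column removed), and $h(\mathbf{w})=[\mathrm{tr}((\mathbf{X}^T\mathbf{W}\mathbf{X})^{-1})]^{-1}$ if $f(\mathbf{w})>0$, $h(\mathbf{w})=0$ otherwise. For $i$ with $0\le w_i<1$ and $x\in[0,1]$, let $\mathbf{w}^{(i)}(x)=\big(\tfrac{1-x}{1-w_i}w_1,\ldots,\tfrac{1-x}{1-w_i}w_{i-1},x,\tfrac{1-x}{1-w_i}w_{i+1},\ldots,\tfrac{1-x}{1-w_i}w_m\big)^T$, $f_i(x)=f(\mathbf{w}^{(i)}(x))$, $f_i^{(-j)}(x)=f_{-j}(\mathbf{w}^{(i)}(x))$, and $h_i(x)=h(\mathbf{w}^{(i)}(x))$. Define constants: if $0<w_i<1$, $b=f_i(0)$, $a=[f(\mathbf{w})-b(1-w_i)^p]/[w_i(1-w_i)^{p-1}]$,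 $b_j=f_i^{(-j)}(0)$, $a_j=[f_{-j}(\mathbf{w})-b_j(1-w_i)^{p-1}]/[w_i(1-w_i)^{p-2}]$; if $w_i=0$, $b=f(\mathbf{w})$, $a=2^pf_i(1/2)-b$, $b_j=f_{-j}(\mathbf{w})$, $a_j=2^{p-1}f_i^{(-j)}(1/2)-b_j$. (Then $f_i(x)=ax(1-x)^{p-1}+b(1-x)^p$ and $f_i^{(-j)}(x)=a_jx(1-x)^{p-2}+b_j(1-x)^{p-1}$ with all these constants nonnegative.) Finally let $A=\sum_{j=1}^pa_j$ and $B=\sum_{j=1}^pb_j$. *)

From HB Require Import structures.
From mathcomp Require Import all_boot all_order all_algebra.
Set Implicit Arguments. Unset Strict Implicit. Unset Printing Implicit Defensive.
Import Order.TTheory GRing.Theory Num.Theory.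
Local Open Scope ring_scope.

Section Defs.
Variable R : rcfType.

Definition Wmx (m : nat) (nu w : 'I_m -> R) : 'M[R]_m :=
  diag_mx (\row_l (w l * nu l)).

Definition infoM (m n : nat) (X : 'M[R]_(m, n)) (nu w : 'I_m -> R) : 'M[R]_n :=
  X^T *m Wmx nu w *m X.

Definition fdet (m n : nat) (X : 'M[R]_(m, n)) (nu w : 'I_m -> R) : R :=
  \det (infoM X nu w).

(* index k of 'I_n.-1 mapped to the k-th index of 'I_n different from j *)
Definition skip_ord (n : nat) (j : 'I_n) (k : 'I_n.-1) : 'I_n :=
  insubd j (bump j k).

Definition colrem (m n : nat) (X : 'M[R]_(m, n)) (j : 'I_n) : 'M[R]_(m, n.-1) :=
  colsub (skip_ord j) X.

Definition fminus (m n : nat) (X : 'M[R]_(m, n)) (nu w : 'I_m -> R) (j : 'I_n) : R :=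
  fdet (colrem X j) nu w.

Definition hval (m n : nat) (X : 'M[R]_(m, n)) (nu w : 'I_m -> R) : R :=
  if 0 < fdet X nu w then (\tr (invmx (infoM X nu w)))^-1 else 0.

Definition wpath (m : nat) (w : 'I_m -> R) (i : 'I_m) (x : R) : 'I_m -> R :=
  fun l => if l == i then x else (1 - x) / (1 - w i) * w l.

Definition f_i m n (X : 'M[R]_(m, n)) nu w i (x : R) := fdet X nu (wpath w i x).
Definition fm_i m n (X : 'M[R]_(m, n)) nu w i j (x : R) := fminus X nu (wpath w i x) j.
Definition h_i m n (X : 'M[R]_(m, n)) nu w i (x : R) := hval X nu (wpath w i x).

Definition cb m n (X : 'M[R]_(m, n)) nu w i : R :=
  if 0 < w i then f_i X nu w i 0 else fdet X nu w.
Definition ca m n (X : 'M[R]_(m, n)) nu w i : R :=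
  if 0 < w i then
    (fdet X nu w - cb X nu w i * (1 - w i) ^+ n) / (w i * (1 - w i) ^+ (n - 1))
  else 2 ^+ n * f_i X nu w i (1 / 2) - cb X nu w i.
Definition cbj m n (X : 'M[R]_(m, n)) nu w i j : R :=
  if 0 < w i then fm_i X nu w i j 0 else fminus X nu w j.
Definition caj m n (X : 'M[R]_(m, n)) nu w i j : R :=
  if 0 < w i then
    (fminus X nu w j - cbj X nu w i j * (1 - w i) ^+ (n - 1))
      / (w i * (1 - w i) ^+ (n - 2))
  else 2 ^+ (n - 1) * fm_i X nu w i j (1 / 2) - cbj X nu w i j.
Definition cA m n (X : 'M[R]_(m, n)) nu w i : R := \sum_(j < n) caj X nu w i j.
Definition cB m n (X : 'M[R]_(m, n)) nu w i : R := \sum_(j < n) cbj X nu w i j.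

Definition unique_max_at (g : R -> R) (x0 v : R) : Prop :=
  [/\ 0 <= x0 <= 1, g x0 = v & forall x, 0 <= x <= 1 -> x != x0 -> g x < v].

End Defs.

(* Along the path [w^(i)(x)] the information matrix is [(1 - x) M0 + x nu_i q_i q_i^T],
   where [M0] belongs to the weights [w^(i)(0)] and [q_i^T] is the [i]-th row of [X].
   By the matrix determinant lemma [f_i(x) = (1 - x)^(p-1) (a x + b (1 - x))], and
   likewise for every [X_{-j}]; as [tr (M^-1) = sum_j f_{-j} / f], this gives
   [h_i(x) = (1 - x) (a x + b (1 - x)) / (A x + B (1 - x))] on [[0, 1)].  Positive
   semidefiniteness makes [a, b, A, B] nonnegative, [f(w) > 0] forces [B > 0] (so
   case (3) never occurs) and [A = 0] only when [a = 0].  What is left is the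
   elementary maximisation of this rational function. *)

From HB Require Import structures.
From mathcomp Require Import all_boot all_order all_algebra.
From mathcomp Require Import polyrcf ring lra.
Set Implicit Arguments. Unset Strict Implicit. Unset Printing Implicit Defensive.
Import Order.TTheory GRing.Theory Num.Theory.
Local Open Scope ring_scope.

Section RankOneUpdate.
Variables (R : comNzRingType) (n : nat).
Implicit Types (P : 'M[R]_n) (al : 'cV[R]_n) (r : 'rV[R]_n).

Definition set_row P (k : 'I_n) r : 'M[R]_n :=
  \matrix_(i, j) (if i == k then r 0 j else P i j).

Lemma row_set_row P k r : row k (set_row P k r) = r.
Proof. by apply/matrixP => i j; rewrite !mxE eqxx (ord1 i). Qed.

Lemma row'_set_row P k r : row' k (set_row P k r) = row' k P.
Proof. by apply/matrixP => i j; rewrite !mxE eq_sym (negPf (neq_lift k i)). Qed.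

Lemma det_set_row_addr P u t c : u != t ->
  \det (set_row P u (row u P + c *: row t P)) = \det P.
Proof.
move=> ut; rewrite (@determinant_multilinear _ _ _ P (set_row P u (row t P)) u 1 c).
- rewrite (@determinant_alternate _ _ (set_row P u (row t P)) u t) ?mulr0 ?addr0 ?mul1r //.
  by move=> j; rewrite !mxE eqxx eq_sym (negPf ut).
- by rewrite !row_set_row scale1r.
- by rewrite row'_set_row.
- by rewrite !row'_set_row.
Qed.

Definition add_rank1_on P al r (s : seq 'I_n) :=
  P + \matrix_(i, j) (if i \in s then al i 0 * r 0 j else 0).

Lemma add_rank1_on_cons P al r u s : u \notin s ->
  add_rank1_on P al r (u :: s) = add_rank1_on (add_rank1_on P al r [:: u]) al r s.
Proof.
move=> us; apply/matrixP => i j; rewrite !mxE !inE.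
by case: eqP => [->|_] /=; rewrite ?(negPf us) addr0.
Qed.

Lemma det_add_rank1_on al r s : uniq s -> forall P,
  \det (add_rank1_on P al r s) = \det P + \sum_(k <- s) al k 0 * \det (set_row P k r).
Proof.
elim: s => [|u s IH] /= => [_ P|/andP [us us'] P].
  rewrite big_nil addr0; congr (\det _).
  by apply/matrixP => i j; rewrite !mxE addr0.
rewrite add_rank1_on_cons // IH // big_cons addrA; congr (_ + _).
  rewrite (@determinant_multilinear _ _ _ P (set_row P u r) u 1 (al u 0)) ?mul1r //.
  - by apply/matrixP => i j; rewrite !mxE !inE eqxx mul1r.
  - by apply/matrixP => i j; rewrite !mxE !inE eq_sym (negPf (neq_lift u i)) addr0.
  - rewrite row'_set_row; apply/matrixP => i j.
    by rewrite !mxE !inE eq_sym (negPf (neq_lift u i)) addr0.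
rewrite !big_seq; apply: eq_bigr => k ks; congr (_ * _).
have uk : u != k by apply: contraNneq us => ->.
(* Row [k] of [set_row P k r] is [r], so adding [al u 0] times it to row [u]
   produces the rank-one term of row [u]. *)
rewrite -(@det_set_row_addr (set_row P k r) u k (al u 0)) //.
congr (\det _); apply/matrixP => i j; rewrite !mxE !inE.
rewrite (negPf uk) eqxx; have [->|_] := eqVneq i u; first by rewrite (negPf uk) mulrC.
by rewrite addr0.
Qed.

Lemma cofactor_set_row P k r j : cofactor (set_row P k r) k j = cofactor P k j.
Proof.
rewrite /cofactor; congr (_ * \det _).
by apply/matrixP => a b; rewrite !mxE eq_sym (negPf (neq_lift k a)).
Qed.

Lemma det_add_rank1 P al r :
  \det (P + al *m r) = \det P + (r *m \adj P *m al) 0 0.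
Proof.
have -> : P + al *m r = add_rank1_on P al r (enum 'I_n).
  by apply/matrixP => i j; rewrite !mxE mem_enum big_ord1.
rewrite det_add_rank1_on ?enum_uniq //; congr (_ + _).
rewrite big_enum /= mxE; apply: eq_bigr => k _.
rewrite (expand_det_row _ k) mxE big_distrr big_distrl /=.
by apply: eq_bigr => j _; rewrite cofactor_set_row !mxE eqxx; ring.
Qed.

End RankOneUpdate.

Section GramMatrix.
Variable R : realFieldType.

Definition gram m n (Y : 'M[R]_(m, n)) (d : 'I_m -> R) : 'M[R]_n :=
  Y^T *m diag_mx (\row_l d l) *m Y.

Definition qform n (P : 'M[R]_n) (v : 'rV[R]_n) : R := (v *m P *m v^T) 0 0.

Lemma gramE m n (Y : 'M[R]_(m, n)) d a b :
  gram Y d a b = \sum_l d l * (Y l a * Y l b).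
Proof.
rewrite /gram !mxE; apply: eq_bigr => l _.
by rewrite mul_mx_diag !mxE; ring.
Qed.

Lemma tr_gram m n (Y : 'M[R]_(m, n)) d : (gram Y d)^T = gram Y d.
Proof. by rewrite /gram !trmx_mul tr_diag_mx trmxK mulmxA. Qed.

Lemma qform_gram m n (Y : 'M[R]_(m, n)) d v :
  qform (gram Y d) v = \sum_l d l * ((v *m Y^T) 0 l) ^+ 2.
Proof.
rewrite /qform /gram !mulmxA -[v *m Y^T *m _ *m Y *m v^T]mulmxA.
rewrite -[Y *m v^T]trmxK trmx_mul trmxK mxE.
by apply: eq_bigr => l _; rewrite mul_mx_diag !mxE; ring.
Qed.

Lemma qform_mulmx_tr k n (S : 'M[R]_(k, n)) (P : 'M[R]_n) v :
  qform (S *m P *m S^T) v = qform P (v *m S).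
Proof. by rewrite /qform trmx_mul !mulmxA. Qed.

Lemma qform_eq0 n (P : 'M[R]_n) v : v *m P = 0 -> qform P v = 0.
Proof. by move=> vP; rewrite /qform vP mul0mx mxE. Qed.

Lemma qform_add_scalar n (P : 'M[R]_n) (s : R) v :
  qform (P + s%:M) v = qform P v + s * \sum_k v 0 k ^+ 2.
Proof.
rewrite /qform mulmxDr mulmxDl mxE; congr (_ + _).
rewrite mul_mx_scalar -scalemxAl mxE; congr (_ * _).
by rewrite mxE; apply: eq_bigr => k _; rewrite mxE expr2.
Qed.

Section NonnegWeights.
Variables (m n : nat) (Y : 'M[R]_(m, n)) (d : 'I_m -> R).
Hypothesis d_ge0 : forall l, 0 <= d l.
Implicit Type v : 'rV[R]_n.

Lemma qform_gram_ge0 v : 0 <= qform (gram Y d) v.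
Proof.
by rewrite qform_gram; apply: sumr_ge0 => l _; rewrite mulr_ge0 ?sqr_ge0.
Qed.

Lemma mul_gram_eq0 v :
  (forall l, d l * (v *m Y^T) 0 l = 0) -> v *m gram Y d = 0.
Proof.
move=> vY; rewrite /gram !mulmxA.
suff -> : v *m Y^T *m diag_mx (\row_l d l) = 0 by rewrite mul0mx.
apply/matrixP => i j.
by rewrite mul_mx_diag (ord1 i) mxE [(\row_l d l) 0 j]mxE mulrC vY mxE.
Qed.

Lemma qform_gram_eq0 v : qform (gram Y d) v = 0 ->
  forall l, d l * (v *m Y^T) 0 l = 0.
Proof.
rewrite qform_gram => /psumr_eq0P sum0 l.
have := sum0 (fun l _ => mulr_ge0 (d_ge0 l) (sqr_ge0 _)) l isT.
move=> dvY0; apply/eqP; rewrite -sqrf_eq0; apply/eqP.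
by rewrite exprMn expr2 -mulrA dvY0 mulr0.
Qed.

Lemma qform_gram_gt0 v : \det (gram Y d) != 0 -> v != 0 -> 0 < qform (gram Y d) v.
Proof.
move=> det0 v0; rewrite lt_def qform_gram_ge0 andbT.
apply: contra det0 => /eqP /qform_gram_eq0 /mul_gram_eq0 vY0.
by apply/det0P; exists v.
Qed.

End NonnegWeights.
End GramMatrix.

Section PosDef.
Variable R : rcfType.

Lemma horner_char_poly_opp n (P : 'M[R]_n) (s : R) :
  (char_poly (- P)).[s] = \det (P + s%:M).
Proof.
rewrite -horner_evalE /char_poly -det_map_mx; congr (\det _).
apply/matrixP => i j; rewrite !mxE /= horner_evalE.
by case: (i == j); rewrite /= ?mulr1n ?mulr0n !hornerE opprK // addrC.
Qed.

(* [s |-> det (P + s)] is a monic polynomial without roots in [0, +oo), hence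
   positive at [0] by the intermediate value theorem. *)
Lemma det_gt0_of_posdef n (P : 'M[R]_n) :
  (forall v, v != 0 -> 0 < qform P v) -> 0 < \det P.
Proof.
move=> posP.
have det_shift_neq0 s : 0 <= s -> \det (P + s%:M) != 0.
  move=> s0; apply/negP => /det0P [v v0 /qform_eq0].
  rewrite qform_add_scalar => qv0.
  have := posP v v0.
  have : 0 <= s * \sum_k v 0 k ^+ 2 by rewrite mulr_ge0 // sumr_ge0 // => k _; rewrite sqr_ge0.
  lra.
set q := char_poly (- P).
have lq : lead_coef q = 1 by apply/monicP; exact: char_poly_monic.
have [N qN] : exists N, forall x, N <= x -> lead_coef q <= q.[x].
  by apply: poly_pinfty_gt_lc; rewrite lq ltr01.
set N' := Num.max N 0.
have N'0 : 0 <= N' by rewrite le_max lexx orbT.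
have qN'0 : 0 < q.[N'] by apply: lt_le_trans (qN _ _); rewrite ?lq ?ltr01 // le_max lexx.
have <- : q.[0] = \det P by rewrite horner_char_poly_opp raddf0 addr0.
rewrite ltNge; apply/negP => q0.
have q_sign : q.[0] <= 0 <= q.[N'] by rewrite q0 ltW.
have [x /andP [x0 _] /rootP qx0] := poly_ivt N'0 q_sign.
by move: (det_shift_neq0 x x0); rewrite -horner_char_poly_opp qx0 eqxx.
Qed.

Lemma det_gram_ge0 m n (Y : 'M[R]_(m, n)) d :
  (forall l, 0 <= d l) -> 0 <= \det (gram Y d).
Proof.
move=> d_ge0; have [->//|det0] := eqVneq (\det (gram Y d)) 0.
by apply/ltW/det_gt0_of_posdef => v v0; apply: qform_gram_gt0.
Qed.

End PosDef.

Lemma mxtrace_invmx (F : fieldType) n (M : 'M[F]_n) : \det M != 0 ->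
  \tr (invmx M) = (\det M)^-1 * \sum_j \det (row' j (col' j M)).
Proof.
move=> detM0; rewrite /invmx unitmxE unitfE detM0 mxtraceZ; congr (_ * _).
apply: eq_bigr => j _; rewrite mxE /cofactor.
by rewrite -signr_odd addnn odd_double expr0 mul1r.
Qed.

Section ColumnDeletion.
Variables (R : rcfType) (n : nat) (j : 'I_n).

(* [v *m skip_mx j] inserts a zero at position [j] into [v : 'rV_n.-1]. *)
Definition skip_mx : 'M[R]_(n.-1, n) := \matrix_(k, k') ((lift j k == k')%:R).

Lemma skip_ord_lift (k : 'I_n.-1) : skip_ord j k = lift j k.
Proof.
apply: val_inj; rewrite /skip_ord val_insubd /=.
by have := ltn_ord (lift j k); rewrite /= => ->.
Qed.

Lemma colrem_mul m (Y : 'M[R]_(m, n)) : colrem Y j = Y *m skip_mx^T.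
Proof.
apply/matrixP => l k; rewrite !mxE skip_ord_lift.
rewrite (bigD1 (lift j k)) //= big1 ?addr0; first by rewrite !mxE eqxx mulr1.
by move=> k' /negPf nk; rewrite !mxE eq_sym nk mulr0.
Qed.

Lemma row'_col'_skip (P : 'M[R]_n) : row' j (col' j P) = skip_mx *m P *m skip_mx^T.
Proof.
apply/matrixP => k l; rewrite !mxE.
rewrite (bigD1 (lift j l)) //= big1 ?addr0; last first.
  by move=> k' /negPf nk; rewrite !mxE eq_sym nk mulr0.
rewrite !mxE eqxx mulr1.
rewrite (bigD1 (lift j k)) //= big1 ?addr0; last first.
  by move=> k' /negPf nk; rewrite !mxE eq_sym nk mul0r.
by rewrite !mxE eqxx mul1r.
Qed.

Lemma gram_colrem m (Y : 'M[R]_(m, n)) d :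
  gram (colrem Y j) d = skip_mx *m gram Y d *m skip_mx^T.
Proof. by rewrite /gram colrem_mul trmx_mul trmxK !mulmxA. Qed.

Lemma row'_col'_gram m (Y : 'M[R]_(m, n)) d :
  row' j (col' j (gram Y d)) = gram (colrem Y j) d.
Proof. by rewrite row'_col'_skip gram_colrem. Qed.

Lemma mul_skip_mx_lift (v : 'rV[R]_n.-1) k : (v *m skip_mx) 0 (lift j k) = v 0 k.
Proof.
rewrite !mxE (bigD1 k) //= big1 ?addr0; first by rewrite !mxE eqxx mulr1.
by move=> k' nk; rewrite !mxE (inj_eq (@lift_inj _ j)) (negPf nk) mulr0.
Qed.

Lemma mul_skip_mx_id (v : 'rV[R]_n.-1) : (v *m skip_mx) 0 j = 0.
Proof.
by rewrite !mxE big1 // => k _; rewrite !mxE eq_sym (negPf (neq_lift j k)) mulr0.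
Qed.

Lemma mul_skip_mx_eq0 (v : 'rV[R]_n.-1) : (v *m skip_mx == 0) = (v == 0).
Proof.
apply/eqP/eqP => [vS0|->]; last by rewrite mul0mx.
by apply/matrixP => i k; rewrite (ord1 i) -mul_skip_mx_lift vS0 !mxE.
Qed.

Lemma det_gram_colrem_gt0 m (Y : 'M[R]_(m, n)) d :
  (forall l, 0 <= d l) -> \det (gram Y d) != 0 -> 0 < \det (gram (colrem Y j) d).
Proof.
move=> d_ge0 det0; apply: det_gt0_of_posdef => v v0.
by rewrite gram_colrem qform_mulmx_tr qform_gram_gt0 ?mul_skip_mx_eq0.
Qed.

End ColumnDeletion.

Arguments skip_mx {R n} j.

Lemma affine_coefs_ge0 (R : realFieldType) (a b : R) :
  (forall x, 0 <= x < 1 -> 0 <= a * x + b * (1 - x)) -> 0 <= a /\ 0 <= b.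
Proof.
move=> ge0; have b0 : 0 <= b by have := ge0 0; rewrite lexx ltr01; lra.
split => //; rewrite leNgt; apply/negP => a_lt0.
have := ge0 ((2 * b - a) / (2 * (b - a))).
rewrite divr_ge0 ?ltr_pdivrMr ?mul1r /=; [|lra..].
have -> : a * ((2 * b - a) / (2 * (b - a))) + b * (1 - (2 * b - a) / (2 * (b - a))) = a / 2.
  by field; rewrite subr_eq0 gt_eqF //; lra.
by rewrite (leNgt 0) ltr_pdivrMr ?mul0r //; lra.
Qed.

(* The value [0] where [a x + b (1 - x) <= 0] mirrors [hval] where [f] vanishes. *)
Definition hrat (R : realFieldType) (a b A B x : R) : R :=
  if (x < 1) && (0 < a * x + b * (1 - x))
  then (1 - x) * (a * x + b * (1 - x)) / (A * x + B * (1 - x)) else 0.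

Section InfoMatrixPath.
Variables (R : rcfType) (m : nat) (nu w : 'I_m -> R) (i : 'I_m).
Hypothesis wi_lt1 : w i < 1.

Definition wt0 l := wpath w i 0 l * nu l.

Lemma infoM_wpath n (Y : 'M[R]_(m, n)) x :
  infoM Y nu (wpath w i x) =
  (1 - x) *: gram Y wt0 + ((x * nu i) *: (row i Y)^T) *m row i Y.
Proof.
apply/matrixP => a b; rewrite gramE [in RHS]mxE [in RHS]mxE gramE.
rewrite [X in _ = _ + X]mxE big_ord1 !mxE.
rewrite big_distrr /= (bigD1 i) //= [in RHS](bigD1 i) //= /wt0 /wpath eqxx.
rewrite !mul0r mulr0 add0r addrC; congr (_ + _); last by ring.
by apply: eq_bigr => l /negPf ->; rewrite subr0; ring.
Qed.

Definition path_b n (Y : 'M[R]_(m, n)) := \det (gram Y wt0).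
Definition path_a n (Y : 'M[R]_(m, n)) :=
  nu i * (row i Y *m \adj (gram Y wt0) *m (row i Y)^T) 0 0.

Lemma fdet_wpath n (Y : 'M[R]_(m, n)) x :
  fdet Y nu (wpath w i x) = (1 - x) ^+ n * path_b Y + x * (1 - x) ^+ n.-1 * path_a Y.
Proof.
rewrite /fdet infoM_wpath det_add_rank1 detZ adjZ /path_b /path_a; congr (_ + _).
by rewrite -!scalemxAr -scalemxAl mxE mxE; ring.
Qed.

Lemma wpath_id : wpath w i (w i) =1 w.
Proof.
move=> l; rewrite /wpath; case: eqP => [->//|_].
by rewrite divff ?mul1r // subr_eq0 gt_eqF.
Qed.

Lemma fdet_wpath_id n (Y : 'M[R]_(m, n)) : fdet Y nu (wpath w i (w i)) = fdet Y nu w.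
Proof.
rewrite /fdet /infoM /Wmx; do 3!f_equal.
by apply/matrixP => a b; rewrite !mxE wpath_id.
Qed.

Hypothesis w_ge0 : forall l, 0 <= w l.

Lemma wpath_ge0 x l : 0 <= x <= 1 -> 0 <= wpath w i x l.
Proof.
move=> /andP [x0 x1]; rewrite /wpath; case: eqP => // _.
by rewrite mulr_ge0 // divr_ge0 // subr_ge0 // ltW.
Qed.

Lemma cb_path_b n (Y : 'M[R]_(m, n)) : cb Y nu w i = path_b Y.
Proof.
have -> : cb Y nu w i = f_i Y nu w i 0.
  rewrite /cb; case: ifP => // /negbT; rewrite -leNgt => wi_le0.
  have wi0 : w i = 0 by apply/le_anti; rewrite wi_le0 w_ge0.
  by rewrite /f_i -wi0 fdet_wpath_id.
by rewrite /f_i fdet_wpath subr0 expr1n mul1r !mul0r addr0.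
Qed.

Lemma ca_path_a n (Y : 'M[R]_(m, n)) : (0 < n)%N -> ca Y nu w i = path_a Y.
Proof.
move=> n_gt0; rewrite /ca cb_path_b subn1; case: ifP => wi_gt0.
  rewrite -(fdet_wpath_id Y) fdet_wpath.
  have wi0 : w i != 0 by rewrite gt_eqF.
  have wi1 : (1 - w i) ^+ n.-1 != 0 by rewrite expf_neq0 // subr_eq0 gt_eqF.
  by field; rewrite wi0 wi1.
rewrite /f_i fdet_wpath.
have -> : 1 - 1 / 2 = 1 / 2 :> R by field.
case: n n_gt0 Y => // n _ Y /=.
rewrite !exprS div1r exprVn.
have two0 : (2 : R) != 0 by rewrite pnatr_eq0.
have two_n0 : (2 : R) ^+ n != 0 by rewrite expf_neq0.
by move: (2 ^+ n) two_n0 => t t0; field.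
Qed.

Lemma fdet_wpathE n (Y : 'M[R]_(m, n)) x : (0 < n)%N ->
  fdet Y nu (wpath w i x) = (1 - x) ^+ n.-1 * (ca Y nu w i * x + cb Y nu w i * (1 - x)).
Proof.
case: n Y => // n Y _; rewrite ca_path_a // cb_path_b fdet_wpath exprS /=.
by ring.
Qed.

Lemma cbj_colrem n (Y : 'M[R]_(m, n)) j : cbj Y nu w i j = cb (colrem Y j) nu w i.
Proof. by []. Qed.

Lemma caj_colrem n (Y : 'M[R]_(m, n)) j : caj Y nu w i j = ca (colrem Y j) nu w i.
Proof. by rewrite /caj /ca [(n.-1 - 1)%N]subn1 !subn1 subn2. Qed.

Hypothesis nu_ge0 : forall l, 0 <= nu l.

Lemma wt0_ge0 l : 0 <= wt0 l.
Proof. by rewrite mulr_ge0 // wpath_ge0 // lexx ler01. Qed.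

Lemma fdet_wpath_ge0 n (Y : 'M[R]_(m, n)) x : 0 <= x <= 1 -> 0 <= fdet Y nu (wpath w i x).
Proof. by move=> x01; apply: det_gram_ge0 => l; rewrite mulr_ge0 ?wpath_ge0. Qed.

Lemma path_b_ge0 n (Y : 'M[R]_(m, n)) : 0 <= path_b Y.
Proof. exact/det_gram_ge0/wt0_ge0. Qed.

Lemma ca_ge0 n (Y : 'M[R]_(m, n)) : (0 < n)%N -> 0 <= ca Y nu w i.
Proof.
move=> n_gt0; apply: (proj1 (@affine_coefs_ge0 _ _ (cb Y nu w i) _)) => x /andP [x0 x1].
have x1_gt0 : 0 < (1 - x) ^+ n.-1 by rewrite exprn_gt0 // subr_gt0.
by rewrite -(pmulr_rge0 _ x1_gt0) -(fdet_wpathE Y x n_gt0) fdet_wpath_ge0 // x0 ltW.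
Qed.

Lemma cb_ge0 n (Y : 'M[R]_(m, n)) : 0 <= cb Y nu w i.
Proof. by rewrite cb_path_b path_b_ge0. Qed.

Lemma cA_ge0 p (X : 'M[R]_(m, p)) : (1 < p)%N -> 0 <= cA X nu w i.
Proof.
by move=> p_gt1; apply: sumr_ge0 => j _; rewrite caj_colrem ca_ge0 // -subn1 subn_gt0.
Qed.

Lemma ca_add_cb_gt0 n (Y : 'M[R]_(m, n)) : (0 < n)%N -> 0 < fdet Y nu w ->
  0 < ca Y nu w i + cb Y nu w i.
Proof.
move=> n_gt0; rewrite -fdet_wpath_id (fdet_wpathE Y _ n_gt0).
rewrite pmulr_rgt0 ?exprn_gt0 ?subr_gt0 //.
have := ca_ge0 Y n_gt0; have := cb_ge0 Y; have := w_ge0 i; have := wi_lt1.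
nra.
Qed.

Lemma path_a_eq0 n (Y : 'M[R]_(m, n)) :
  0 < path_b Y -> path_a Y = 0 -> nu i = 0 \/ row i Y = 0.
Proof.
rewrite /path_b /path_a; set P := gram Y _; set r := row i Y => detP_gt0.
move=> /eqP; rewrite mulf_eq0 => /orP [/eqP|/eqP adj0]; [by left|right].
have detP0 : \det P != 0 by rewrite gt_eqF.
have unitP : P \in unitmx by rewrite unitmxE unitfE.
have adjE : \adj P = \det P *: invmx P by rewrite /invmx unitP scalerA divff ?scale1r.
move: adj0; rewrite adjE -scalemxAr -scalemxAl mxE => /eqP.
rewrite mulf_eq0 (negPf detP0) /= => /eqP rPr0.
set y := r *m invmx P.
have qy0 : qform P y = 0.
  by rewrite /qform /y trmx_mul trmx_inv tr_gram -(mulmxA r) mulVmx // mulmx1 mulmxA.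
have y0 : y = 0.
  apply/eqP; apply: contraT => y0.
  by have := qform_gram_gt0 wt0_ge0 detP0 y0; rewrite qy0 ltxx.
by rewrite -(mulmx1 r) -(mulVmx unitP) mulmxA -/y y0 mul0mx.
Qed.

Lemma path_a_colrem_eq0 p (X : 'M[R]_(m, p)) : (1 < p)%N ->
  (forall j, 0 < path_b (colrem X j)) ->
  (forall j, path_a (colrem X j) = 0) -> path_a X = 0.
Proof.
move=> p_gt1 b_gt0 a0; rewrite /path_a.
have [->|nui0] := eqVneq (nu i) 0; first by rewrite mul0r.
have rowX0 : row i X = 0.
  apply/matrixP => z k; rewrite (ord1 z) !mxE.
  have : (0 < #|predC1 k|)%N by rewrite cardC1 card_ord -subn1 subn_gt0.
  case/card_gt0P => j /= jk; have [k' kE _] := unlift_some jk.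
  have [ai0|] := path_a_eq0 (b_gt0 j) (a0 j); first by rewrite ai0 eqxx in nui0.
  by move/matrixP/(_ 0 k'); rewrite !mxE skip_ord_lift -kE.
by rewrite rowX0 mul0mx mxE big1 ?mulr0 // => k _; rewrite mxE mul0r.
Qed.

Lemma path_b_colrem_eq0 p (X : 'M[R]_(m, p)) j : path_b (colrem X j) = 0 ->
  exists u : 'rV[R]_p, [/\ u != 0, u 0 j = 0 & forall l, wt0 l * (u *m X^T) 0 l = 0].
Proof.
move/eqP/det0P => [v v0 vP]; exists (v *m skip_mx j); split.
- by rewrite mul_skip_mx_eq0.
- exact: mul_skip_mx_id.
- apply: qform_gram_eq0; first exact: wt0_ge0.
  by rewrite -qform_mulmx_tr -gram_colrem; apply: qform_eq0.
Qed.

(* Two independent vectors annihilated by all rows but the [i]-th have a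
   nonzero combination annihilated by row [i] as well. *)
Lemma det_infoM_eq0 p (X : 'M[R]_(m, p)) : (0 < p)%N ->
  (forall j, path_b (colrem X j) = 0) -> \det (infoM X nu w) = 0.
Proof.
move=> p_gt0 b0.
have [u [u0 _ uX]] := path_b_colrem_eq0 (b0 (Ordinal p_gt0)).
have /existsP [k uk] : [exists k, u 0 k != 0].
  apply: contraNT u0 => /existsPn uk0; apply/eqP/matrixP => a k.
  by rewrite (ord1 a) mxE; apply/eqP/negPn/uk0.
have [v [v0 vk vX]] := path_b_colrem_eq0 (b0 k).
pose xi (y : 'rV[R]_p) := (y *m X^T) 0 i.
have [z [z0 zX zi]] : exists z : 'rV[R]_p,
    [/\ z != 0, forall l, wt0 l * (z *m X^T) 0 l = 0 & xi z = 0].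
  have [ui0|ui0] := eqVneq (xi u) 0; first by exists u.
  have [vi0|vi0] := eqVneq (xi v) 0; first by exists v.
  have zE l : ((xi v *: u - xi u *: v) *m X^T) 0 l =
      xi v * (u *m X^T) 0 l - xi u * (v *m X^T) 0 l.
    by rewrite mulmxBl -!scalemxAl !mxE.
  exists (xi v *: u - xi u *: v); split.
  - apply: contraTneq uk => /matrixP /(_ 0 k); rewrite !mxE vk mulr0 subr0 => /eqP.
    by rewrite mulf_eq0 (negPf vi0) /= => /eqP ->; rewrite eqxx.
  - move=> l; rewrite zE mulrBr [wt0 l * (xi v * _)]mulrCA [wt0 l * (xi u * _)]mulrCA.
    by rewrite uX vX !mulr0 subrr.
  - by rewrite /xi zE mulrC subrr.
apply/eqP/det0P; exists z => //; apply: mul_gram_eq0 => l.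
have [->|li] := eqVneq l i; first by move: zi; rewrite /xi => ->; rewrite mulr0.
have -> : w l * nu l = (1 - w i) * wt0 l.
  by rewrite /wt0 /wpath (negPf li) subr0; field; rewrite subr_eq0 gt_eqF.
by rewrite -mulrA zX mulr0.
Qed.

Lemma cB_gt0 p (X : 'M[R]_(m, p)) : (0 < p)%N -> 0 < fdet X nu w -> 0 < cB X nu w i.
Proof.
move=> p_gt0 f_gt0; have bj_ge0 j : 0 <= cbj X nu w i j by rewrite cbj_colrem cb_ge0.
rewrite lt_def sumr_ge0 ?andbT //; apply: contraTneq f_gt0 => /psumr_eq0P bj0.
rewrite /fdet det_infoM_eq0 ?ltxx // => j.
by rewrite -cb_path_b // -cbj_colrem; apply: bj0 => // j' _.
Qed.

Lemma ca_eq0_of_cA_eq0 p (X : 'M[R]_(m, p)) : (1 < p)%N -> 0 < fdet X nu w ->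
  cA X nu w i = 0 -> ca X nu w i = 0.
Proof.
move=> p_gt1 f_gt0 /psumr_eq0P aj0.
have p1_gt0 : (0 < p.-1)%N by rewrite -subn1 subn_gt0.
have {}aj0 j : path_a (colrem X j) = 0.
  rewrite -ca_path_a // -caj_colrem aj0 // => j' _.
  by rewrite caj_colrem ca_ge0.
rewrite (ca_path_a X (ltnW p_gt1)); apply: path_a_colrem_eq0 => // j.
have : 0 < fdet (colrem X j) nu w.
  by apply: det_gram_colrem_gt0 => [l|]; rewrite ?mulr_ge0 ?gt_eqF.
rewrite -fdet_wpath_id // fdet_wpath aj0 mulr0 addr0 pmulr_rgt0 //.
by rewrite exprn_gt0 // subr_gt0.
Qed.

Lemma det_row'_col'_infoM n (Y : 'M[R]_(m, n)) w' j :
  \det (row' j (col' j (infoM Y nu w'))) = fdet (colrem Y j) nu w'.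
Proof. exact: (congr1 determinant (row'_col'_gram j Y _)). Qed.

Lemma mxtrace_invmx_infoM p (X : 'M[R]_(m, p)) x : (1 < p)%N ->
  fdet X nu (wpath w i x) != 0 ->
  \tr (invmx (infoM X nu (wpath w i x))) =
  (1 - x) ^+ p.-2 * (cA X nu w i * x + cB X nu w i * (1 - x)) / fdet X nu (wpath w i x).
Proof.
move=> p_gt1 f0; rewrite mxtrace_invmx // mulrC; congr (_ * _).
have p1_gt0 : (0 < p.-1)%N by rewrite -subn1 subn_gt0.
under eq_bigr do rewrite det_row'_col'_infoM (fdet_wpathE _ _ p1_gt0).
rewrite -big_distrr /= big_split /= -!big_distrl /=.
by congr (_ * (_ * _ + _ * _)); apply: eq_bigr => j _; rewrite ?caj_colrem.
Qed.

Lemma h_iE p (X : 'M[R]_(m, p)) x : (1 < p)%N -> 0 <= x <= 1 ->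
  h_i X nu w i x = hrat (ca X nu w i) (cb X nu w i) (cA X nu w i) (cB X nu w i) x.
Proof.
move=> p_gt1 /andP [x0 x1]; rewrite /h_i /hval /hrat.
have p1_gt0 : (0 < p.-1)%N by rewrite -subn1 subn_gt0.
rewrite (fdet_wpathE _ _ (ltnW p_gt1)); have [->|x_neq1] := eqVneq x 1.
  by rewrite subrr expr0n gtn_eqF // mul0r ltxx ltxx.
have x_lt1 : x < 1 by rewrite lt_neqAle x_neq1 x1.
have pow_gt0 k : 0 < (1 - x) ^+ k by rewrite exprn_gt0 // subr_gt0.
rewrite x_lt1 pmulr_rgt0 //=; case: ifP => // G_gt0.
rewrite mxtrace_invmx_infoM // (fdet_wpathE _ _ (ltnW p_gt1)) ?mulf_neq0 ?gt_eqF //.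
rewrite -(prednK p1_gt0) exprS /= invf_div.
set T := cA X nu w i * x + _; have [->|T0] := eqVneq T 0.
  by rewrite mulr0 !invr0 !mulr0.
by field; rewrite T0 gt_eqF.
Qed.

End InfoMatrixPath.

Lemma eq_unique_max_at (R : rcfType) (f g : R -> R) x0 v :
  (forall x, 0 <= x <= 1 -> f x = g x) -> unique_max_at f x0 v -> unique_max_at g x0 v.
Proof.
move=> fg [x01 fx0 f_lt]; split=> [//||x x01' xx0]; first by rewrite -fg.
by rewrite -fg // f_lt.
Qed.

Lemma divr_in01 (R : realFieldType) (u v : R) : 0 < u * v -> u * v < v * v -> 0 < u / v < 1.
Proof.
move=> uv_gt0 uv_lt.
have v0 : v != 0 by apply: contraTneq uv_gt0 => ->; rewrite mulr0 ltxx.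
have vv_gt0 : 0 < v * v by rewrite lt_def mulf_neq0 //= -expr2 sqr_ge0.
have -> : u / v = (u * v) / (v * v) by field.
by rewrite divr_gt0 // ltr_pdivrMr // mul1r.
Qed.

Section HratMax.
Variables (R : rcfType) (a b A B : R).
Hypotheses (a_ge0 : 0 <= a) (b_ge0 : 0 <= b) (A_ge0 : 0 <= A) (B_gt0 : 0 < B).
Hypotheses (ab_gt0 : 0 < a + b) (a0_of_A0 : A = 0 -> a = 0).

Let G x := a * x + b * (1 - x).
Let T x := A * x + B * (1 - x).
Let g x := (1 - x) * G x / T x.

Let T_gt0 x : 0 <= x < 1 -> 0 < T x.
Proof.
move=> /andP [x0 x1]; have := mulr_ge0 A_ge0 x0.
have : 0 < B * (1 - x) by rewrite mulr_gt0 // subr_gt0.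
rewrite /T; lra.
Qed.

Let G_gt0 x : 0 < x < 1 -> 0 < G x.
Proof.
move=> /andP [x0 x1]; rewrite /G.
have : 0 < (a + b) * (x * (1 - x)) by rewrite !mulr_gt0 // subr_gt0.
have : 0 <= a * (x * x) by rewrite !mulr_ge0 // ltW.
have : 0 <= b * ((1 - x) * (1 - x)) by rewrite !mulr_ge0 // subr_ge0 ltW.
nra.
Qed.

Let hrat_in x : 0 < x < 1 -> hrat a b A B x = g x.
Proof. by move=> x01; rewrite /hrat G_gt0 ?andbT //; case/andP: x01 => _ ->. Qed.

Let hrat_lt x0 V : 0 < V ->
  (forall x, 0 <= x < 1 -> 0 < G x -> x != x0 -> g x < V) ->
  forall x, 0 <= x <= 1 -> x != x0 -> hrat a b A B x < V.
Proof.
move=> V_gt0 g_lt x /andP [x_ge0 _] xx0; rewrite /hrat.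
by case: ifP => // /andP [x1 Gx]; apply: g_lt; rewrite ?x_ge0.
Qed.

Lemma hrat_max_AeqB : A = B /\ 2 * b < a ->
  let xs := (a - 2 * b) / (2 * a - 2 * b) in
  [/\ 0 < a ^+ 2 / (4 * (a - b) * B), 0 < xs < 1 &
      unique_max_at (hrat a b A B) xs (a ^+ 2 / (4 * (a - b) * B))].
Proof.
case=> AB ab xs; set V := a ^+ 2 / _; have b0 := b_ge0.
have c_gt0 : 0 < a - b by lra.
have xs01 : 0 < xs < 1.
  apply: divr_in01; first by rewrite mulr_gt0 //; lra.
  by rewrite ltr_pM2r; lra.
have V_gt0 : 0 < V by rewrite divr_gt0 ?exprn_gt0 ?mulr_gt0 //; lra.
(* For [A = B] the denominator is the constant [B], so [g] is a concave parabola. *)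
have gE x : g x = V - (a - b) * (x - xs) ^+ 2 / B.
  rewrite /g /T /G /V /xs AB; field.
  by rewrite !gt_eqF //; lra.
split=> //; split; first by case/andP: xs01 => /ltW -> /ltW ->.
  by rewrite hrat_in // gE subrr expr0n /= mulr0 mul0r subr0.
apply: hrat_lt => // x _ _ xxs; rewrite gE.
have : 0 < (a - b) * (x - xs) ^+ 2 / B.
  by rewrite divr_gt0 // mulr_gt0 // lt_def sqrf_eq0 subr_eq0 xxs sqr_ge0.
lra.
Qed.

Lemma le_boundary_case :
  ~ [/\ A != B, 0 < A, 0 < B, b < a & (b * A < a * B /\ b * A < (a - b) * B)] ->
  ~ (A = B /\ 2 * b < a) -> (a - b) * B <= b * A.
Proof.
move=> not_interior not_AeqB; rewrite leNgt; apply/negP => bA_lt.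
have b0 := b_ge0; have bA_ge0 : 0 <= b * A by rewrite mulr_ge0.
have ba : b < a by rewrite -subr_gt0 -(pmulr_lgt0 _ B_gt0); lra.
have A_gt0 : 0 < A.
  by rewrite lt_def A_ge0 andbT; apply: contraTneq ba => /a0_of_A0 ->; rewrite -leNgt.
have [AB|AB] := eqVneq A B.
  by apply: not_AeqB; split=> //; rewrite -subr_gt0 -(pmulr_lgt0 _ B_gt0); nra.
by apply: not_interior; split=> //; have := mulr_ge0 b0 (ltW B_gt0); nra.
Qed.

Lemma hrat_max_at0 :
  ~ [/\ A != B, 0 < A, 0 < B, b < a & (b * A < a * B /\ b * A < (a - b) * B)] ->
  ~ (A = B /\ 2 * b < a) -> 0 < b / B /\ unique_max_at (hrat a b A B) 0 (b / B).
Proof.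
move=> not_interior not_AeqB; have le_bA := le_boundary_case not_interior not_AeqB.
have b0 := b_ge0; have a0 := a_ge0.
have b_gt0 : 0 < b.
  rewrite lt_def b0 andbT; apply/eqP => b_eq0; move: le_bA ab_gt0.
  rewrite b_eq0 mul0r subr0 addr0 => aB_le0 a_gt0.
  by move: aB_le0; rewrite leNgt mulr_gt0.
have V_gt0 : 0 < b / B by rewrite divr_gt0.
split=> //; split; first by rewrite lexx ler01.
  by rewrite /hrat ltr01 mulr0 add0r subr0 mulr1 b_gt0 mul1r mulr0 add0r mulr1.
apply: hrat_lt => // x /andP [x0 x1] _ x_neq0.
have x_gt0 : 0 < x by rewrite lt_def x_neq0 x0.
have T_gt0x : 0 < T x by apply: T_gt0; rewrite x0 x1.
set e := b * A - (a - b) * B.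
have num_gt0 : 0 < e * (1 - x) + b * A * x.
  have [A0|A_neq0] := eqVneq A 0.
    have -> : e * (1 - x) + b * A * x = b * B * (1 - x).
      by rewrite /e A0 (a0_of_A0 A0); ring.
    by rewrite !mulr_gt0 // subr_gt0.
  have : 0 < b * A * x by rewrite !mulr_gt0 // lt_def A_neq0 A_ge0.
  have : 0 <= e * (1 - x) by rewrite mulr_ge0 ?subr_ge0 // ltW.
  lra.
have -> : g x = b / B - x * (e * (1 - x) + b * A * x) / (B * T x).
  by rewrite /g /G /T /e; field; rewrite !gt_eqF.
have : 0 < x * (e * (1 - x) + b * A * x) / (B * T x) by rewrite !(divr_gt0, mulr_gt0).
lra.
Qed.

Section Interior.
Hypotheses (AB : A != B) (A_gt0 : 0 < A) (ba : b < a).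
Hypotheses (bA_lt : b * A < a * B) (bA_lt' : b * A < (a - b) * B).

Let c := a - b.
Let d := a * B - b * A.
Let ts := Num.sqrt (A * d / c).
Let xs := (ts - B) / (A - B).
Let V := (A * c + d - 2 * c * ts) / (A - B) ^+ 2.

Let c_gt0 : 0 < c. Proof. by rewrite subr_gt0. Qed.
Let d_gt0 : 0 < d. Proof. by rewrite subr_gt0. Qed.
Let AB_neq0 : A - B != 0. Proof. by rewrite subr_eq0. Qed.

Let sqr_ts : ts ^+ 2 = A * d / c.
Proof. by rewrite sqr_sqrtr // divr_ge0 // ?mulr_ge0 // ltW. Qed.

Let ts_between : Num.min A B < ts < Num.max A B.
Proof.
have a_gt0 : 0 < a := le_lt_trans b_ge0 ba.
have ts_ge0 : 0 <= ts by apply: sqrtr_ge0.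
have AB2_gt0 : 0 < (A - B) ^+ 2 by rewrite lt_def sqrf_eq0 AB_neq0 sqr_ge0.
(* [(ts^2 - A^2) (ts^2 - B^2)] works out to [- a A (A - B)^2 (c B - b A) / c^2 < 0]. *)
have ts_AB : (ts - A) * (ts - B) < 0.
  have prodE : (ts - A) * (ts - B) * ((ts + A) * (ts + B)) =
               - (a * A * (A - B) ^+ 2 * (c * B - b * A)) / c ^+ 2.
    have -> : (ts - A) * (ts - B) * ((ts + A) * (ts + B)) =
              (ts ^+ 2 - A ^+ 2) * (ts ^+ 2 - B ^+ 2) by ring.
    by rewrite sqr_ts /d /c; field; rewrite gt_eqF.
  have : 0 < (a * A * (A - B) ^+ 2 * (c * B - b * A)) / c ^+ 2.
    rewrite divr_gt0 ?exprn_gt0 // mulr_gt0 //; last by rewrite subr_gt0.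
    exact: mulr_gt0 (mulr_gt0 a_gt0 A_gt0) AB2_gt0.
  have : 0 < (ts + A) * (ts + B) by rewrite mulr_gt0 // ltr_wpDl.
  nra.
have [AltB|BleA] := ltP A B.
  by apply/andP; split; rewrite ltNge; apply/negP; nra.
by apply/andP; split; rewrite ltNge; apply/negP; nra.
Qed.

Let xs_in01 : 0 < xs < 1.
Proof.
have := ts_between; have [AltB|BleA] := ltP A B => /andP [ts1 ts2].
  by apply: divr_in01; nra.
by apply: divr_in01; nra.
Qed.

(* Substituting [t = T x], [g] becomes [(A c + d - c t - A d / t) / (A - B)^2], which
   the identity [c ts^2 = A d] turns into a perfect square in [t - ts]. *)
Let g_interiorE x : 0 <= x < 1 -> g x = V - c * (T x - ts) ^+ 2 / ((A - B) ^+ 2 * T x).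
Proof.
move=> x01; have T0 : T x != 0 by rewrite gt_eqF ?T_gt0.
have ts_eq : c * ts ^+ 2 - A * d = 0 by rewrite sqr_ts; field; rewrite gt_eqF.
rewrite -[RHS]addr0 -(mul0r ((A - B) ^+ 2 * T x)^-1) -ts_eq.
by rewrite /g /V /G /T /c /d; field; rewrite T0 AB_neq0.
Qed.

Let V_sqrtE : ((Num.sqrt (A * (a - b)) - Num.sqrt (a * B - b * A)) / (A - B)) ^+ 2 = V.
Proof.
rewrite -/c -/d expr_div_n /V; congr (_ / _).
have sqrt_prod : Num.sqrt (A * c) * Num.sqrt d = c * ts.
  rewrite -sqrtrM ?mulr_ge0 ?ltW // -[c in RHS]ger0_norm ?ltW // -sqrtr_sqr.
  by rewrite -sqrtrM ?sqr_ge0 //; congr Num.sqrt; field; rewrite gt_eqF.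
by rewrite sqrrB sqrt_prod !sqr_sqrtr ?mulr_ge0 ?ltW //; ring.
Qed.

Lemma hrat_max_interior :
  [/\ Num.min A B < ts < Num.max A B, 0 < xs < 1 &
      unique_max_at (hrat a b A B) xs
        (((Num.sqrt (A * (a - b)) - Num.sqrt (a * B - b * A)) / (A - B)) ^+ 2)].
Proof.
have [xs_gt0 xs_lt1] := andP xs_in01.
have Txs : T xs = ts by rewrite /T /xs; field.
have gxs : g xs = V by rewrite g_interiorE ?(ltW xs_gt0) // Txs subrr expr0n mulr0 mul0r subr0.
have V_gt0 : 0 < V by rewrite -gxs divr_gt0 ?T_gt0 ?mulr_gt0 ?G_gt0 ?subr_gt0 ?xs_in01 ?ltW.
rewrite V_sqrtE; split; [exact: ts_between | exact: xs_in01 | split].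
- by rewrite !ltW.
- by rewrite hrat_in ?xs_in01.
apply: hrat_lt => // x x01 _ xxs; rewrite g_interiorE //.
have Tts : T x - ts = (A - B) * (x - xs) by rewrite -Txs /T; ring.
have sq_gt0 : 0 < (T x - ts) ^+ 2 by rewrite exprn_even_gt0 // Tts mulf_neq0 // subr_eq0.
have AB2_gt0 : 0 < (A - B) ^+ 2 by rewrite exprn_even_gt0.
suff : 0 < c * (T x - ts) ^+ 2 / ((A - B) ^+ 2 * T x) by lra.
exact: divr_gt0 (mulr_gt0 c_gt0 sq_gt0) (mulr_gt0 AB2_gt0 (T_gt0 x01)).
Qed.

End Interior.
End HratMax.

Theorem theorem2 (R : rcfType) (m p : nat) (X : 'M[R]_(m, p))
    (nu w : 'I_m -> R) (i : 'I_m) :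
  (2 <= p)%N -> (p < m)%N ->
  (forall l, 0 <= nu l) ->
  (forall l, 0 <= w l) -> \sum_l w l = 1 ->
  (forall l, w l < 1) ->
  0 < fdet X nu w ->
  let a := ca X nu w i in
  let b := cb X nu w i in
  let A := cA X nu w i in
  let B := cB X nu w i in
  let h := h_i X nu w i in
  let case1 := [/\ A != B, 0 < A, 0 < B, b < a & (b * A < a * B /\ b * A < (a - b) * B)] in
  let case2 := (A = B /\ 2 * b < a) in
  let case3 := [/\ A != B, B = 0 & b = 0] in
  [/\ case1 ->
        let ts := Num.sqrt (A * (a * B - b * A) / (a - b)) in
        let xs := (ts - B) / (A - B) in
        [/\ Num.min A B < ts < Num.max A B, 0 < xs < 1 &
            unique_max_at h xs
              (((Num.sqrt (A * (a - b)) - Num.sqrt (a * B - b * A)) / (A - B)) ^+ 2)],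
      case2 ->
        let xs := (a - 2 * b) / (2 * a - 2 * b) in
        [/\ 0 < a ^+ 2 / (4 * (a - b) * B), 0 < xs < 1 &
            unique_max_at h xs (a ^+ 2 / (4 * (a - b) * B))],
      case3 -> 0 < a / A /\ unique_max_at h 0 (a / A) &
      (~ case1 /\ ~ case2 /\ ~ case3) ->
        0 < b / B /\ unique_max_at h 0 (b / B)].
Proof.
move=> p_ge2 _ nu_ge0 w_ge0 _ w_lt1 f_gt0 a b A B h case1 case2 case3.
have wi_lt1 := w_lt1 i; have p_gt0 := ltnW p_ge2.
have a_ge0 : 0 <= a := ca_ge0 wi_lt1 w_ge0 nu_ge0 X p_gt0.
have b_ge0 : 0 <= b := cb_ge0 wi_lt1 w_ge0 nu_ge0 X.
have A_ge0 : 0 <= A := cA_ge0 wi_lt1 w_ge0 nu_ge0 X p_ge2.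
have B_gt0 : 0 < B := cB_gt0 wi_lt1 w_ge0 nu_ge0 p_gt0 f_gt0.
have ab_gt0 : 0 < a + b := ca_add_cb_gt0 wi_lt1 w_ge0 nu_ge0 p_gt0 f_gt0.
have a0_of_A0 : A = 0 -> a = 0 := ca_eq0_of_cA_eq0 wi_lt1 w_ge0 nu_ge0 p_ge2 f_gt0.
have hE x : 0 <= x <= 1 -> hrat a b A B x = h x.
  by move=> x01; rewrite /h (h_iE nu wi_lt1 w_ge0 X p_ge2 x01).
split.
- case=> AB A_gt0 _ ba [bA_lt bA_lt'].
  have [] := hrat_max_interior a_ge0 b_ge0 A_ge0 B_gt0 ab_gt0 AB A_gt0 ba bA_lt bA_lt'.
  by move=> ts_AB xs01 /(eq_unique_max_at hE).
- move=> /(hrat_max_AeqB a_ge0 b_ge0 B_gt0 ab_gt0) [V_gt0 xs01].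
  by move=> /(eq_unique_max_at hE).
- by case=> _ B0 _; move: B_gt0; rewrite B0 ltxx.
- case=> not1 [not2 _].
  have [V_gt0] := hrat_max_at0 a_ge0 b_ge0 A_ge0 B_gt0 ab_gt0 a0_of_A0 not1 not2.
  by move=> /(eq_unique_max_at hE).
Qed.
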